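(* For every positive integer $n$, $w_n(x)=s_n(x)$ as polynomials, where $$w_n(x)=\sum_{k=1}^n w(n,k)x^{k-1},\qquad s_n(x)=\sum_{k=1}^nN(n,k)x^{k-1}(x+1)^{n-k}.$$
   Context: For $n\ge k\ge1$, $N(n,k)=\frac1n\binom{n}{k}\binom{n}{k-1}$ (Narayana number) and $w(n,k)=\frac1k\binom{n-1}{k-1}\binom{n+k}{k-1}$. *)

From mathcomp Require Import all_boot all_order all_algebra.
Set Implicit Arguments. Unset Strict Implicit. Unset Printing Implicit Defensive.
Import GRing.Theory Num.Theory.
Local Open Scope ring_scope.

Definition narayana (n k : nat) : rat :=
  (n%:R)^-1 * ('C(n, k))%:R * ('C(n, k.-1))%:R.

Definition wnum (n k : nat) : rat :=
  (k%:R)^-1 * ('C(n.-1, k.-1))%:R * ('C(n + k, k.-1))%:R.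

Definition wpoly (n : nat) : {poly rat} :=
  \sum_(1 <= k < n.+1) (wnum n k)%:P * 'X^(k.-1).

Definition spoly (n : nat) : {poly rat} :=
  \sum_(1 <= k < n.+1) (narayana n k)%:P * 'X^(k.-1) * ('X + 1) ^+ (n - k).

From mathcomp Require Import all_boot all_order all_algebra.
From mathcomp Require Import ring zify.
Import GRing.Theory Num.Theory.
Local Open Scope ring_scope.

(* The coefficient of x^j in s_n is sum_i N(n,i+1) C(n-i-1,j-i).  Trinomial
   revision, C(n,i+1) C(n-i-1,j-i) = C(n,j+1) C(j+1,i+1), pulls the factor
   C(n,j+1)/n out of the sum, and what remains is C(n+j+1,j) by Vandermonde's
   convolution.  Since C(n,j+1)/n = C(n-1,j)/(j+1), this is w(n,j+1). *)

Lemma bin_trinomial n m k : (k <= m)%N ->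
  ('C(n, m) * 'C(m, k) = 'C(n, k) * 'C(n - k, m - k))%N.
Proof.
move=> le_km; have [lt_nm | le_mn] := ltnP n m.
  rewrite bin_small //; have [lt_nk | le_kn] := ltnP n k.
    by rewrite (bin_small lt_nk) mul0n.
  by rewrite (@bin_small (n - k) (m - k)) ?muln0 //; lia.
have fact_pos : (0 < k`! * (m - k)`! * (n - m)`!)%N by rewrite !muln_gt0 !fact_gt0.
apply/eqP; rewrite -(eqn_pmul2r fact_pos); apply/eqP.
have le_kn : (k <= n)%N by apply: leq_trans le_mn.
have le_mkn : (m - k <= n - k)%N by lia.
transitivity ('C(n, m) * ('C(m, k) * (k`! * (m - k)`!)) * (n - m)`!)%N; first ring.
rewrite bin_fact // -mulnA bin_fact // -(bin_fact le_kn) -(bin_fact le_mkn).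
have -> : (n - k - (m - k) = n - m)%N by lia.
ring.
Qed.

Lemma coef_XaddC1_exp (R : nzRingType) m i :
  (('X + 1) ^+ m : {poly R})`_i = ('C(m, i))%:R.
Proof.
elim: m i => [|m IHm] [|i]; rewrite ?expr0 ?coef1 // exprSr mulrDr mulr1 coefD coefMX /=.
  by rewrite IHm !bin0 add0r.
by rewrite !IHm binS natrD addrC.
Qed.

Lemma wpolyE n : wpoly n = \poly_(k < n) wnum n k.+1.
Proof.
rewrite /wpoly poly_def big_add1 /= big_mkord.
by apply: eq_bigr => k _; rewrite mul_polyC.
Qed.

Lemma coef_spoly_sum n j :
  (spoly n)`_j = \sum_(i < n | (i <= j)%N) narayana n i.+1 * ('C(n - i.+1, j - i))%:R.
Proof.
rewrite /spoly coef_sum big_add1 /= big_mkord [RHS]big_mkcond /=.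
apply: eq_bigr => i _; rewrite -mulrA coefCM coefXnM coef_XaddC1_exp.
by case: ltnP => _; rewrite ?mulr0.
Qed.

Lemma narayana_mul_bin n i j : (i <= j)%N ->
  narayana n i.+1 * ('C(n - i.+1, j - i))%:R
    = n%:R^-1 * ('C(n, j.+1))%:R * ('C(n, i) * 'C(j.+1, j - i))%:R.
Proof.
move=> le_ij; rewrite /narayana /= -!mulrA; congr (_ * _).
rewrite -!natrM; congr _%:R.
by rewrite -[(j - i)%N]subSS bin_sub // mulnCA [RHS]mulnCA bin_trinomial.
Qed.

Lemma coef_spoly n j :
  (spoly n)`_j = n%:R^-1 * ('C(n, j.+1))%:R * ('C(n + j.+1, j))%:R.
Proof.
rewrite coef_spoly_sum.
under eq_bigr => i le_ij do rewrite narayana_mul_bin //.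
rewrite -big_distrr /=.
have [lt_jn | le_nj] := ltnP j n; last by rewrite bin_small ?mulr0 ?mul0r.
rewrite -natr_sum (eq_bigl (fun i : 'I_n => (i < j.+1)%N)) //.
by rewrite -(big_ord_widen _ (fun i => 'C(n, i) * 'C(j.+1, j - i))%N lt_jn) binomial.Vandermonde.
Qed.

Lemma wnumE n j : (0 < n)%N ->
  wnum n j.+1 = n%:R^-1 * ('C(n, j.+1))%:R * ('C(n + j.+1, j))%:R.
Proof.
move=> n_gt0; rewrite /wnum /=; congr (_ * _).
have nz_j : (j.+1)%:R != 0 :> rat by rewrite pnatr_eq0.
have nz_n : n%:R != 0 :> rat by rewrite pnatr_eq0 -lt0n.
by rewrite -[('C(n, j.+1))%:R](mulKf nz_j) -natrM -mul_bin_diag natrM mulrCA mulKf.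
Qed.

Theorem lemma4p5 (n : nat) : (0 < n)%N -> wpoly n = spoly n.
Proof.
move=> n_gt0; apply/polyP => j.
rewrite wpolyE coef_poly coef_spoly.
case: ltnP => [_ | le_nj]; first exact: wnumE.
by rewrite bin_small ?mulr0 ?mul0r.
Qed.
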